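(* Let $\mathcal{G}$ be a network with non-monitor set $N$ and set of measurement paths $P$, let $S\subseteq N$ and $k\ge1$. (a) If for every failure set $F\subseteq N$ with $|F|\le k$ and every node $v\in S\setminus F$ there exists $p\in P$ traversing $v$ but none of the nodes of $F$, then $S$ is $k$-identifiable. (b) If $S$ is $k$-identifiable, then for every failure set $F\subseteq N$ with $|F|\le k-1$ and every node $v\in S\setminus F$ there exists $p\in P$ traversing $v$ but none of the nodes of $F$.
   Context: $\mathcal{G}$ is a finite connected undirected graph whose node set is partitioned into monitors $M$ and non-monitors $N$; $P$ is an arbitrary set of measurement paths. A failure set is any $F\subseteq N$; a path fails iff it traverses a node of $F$. $P_F$ is the set of paths in $P$ traversing at least one node of $F$; $F_1,F_2$ are distinguishable iff $P_{F_1}\ne P_{F_2}$. $S\subseteq N$ is $k$-identifiable if any two failure sets $F_1,F_2$ with $|F_1|,|F_2|\le k$ and $F_1\cap S\ne F_2\cap S$ are distinguishable. *)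

From mathcomp Require Import all_boot.
Set Implicit Arguments. Unset Strict Implicit. Unset Printing Implicit Defensive.

(* A network: finite connected simple undirected graph on node type V with
   adjacency relation e; node set partitioned into monitors M and
   non-monitors N := ~: M. *)
Definition simple_graph (V : finType) (e : rel V) : Prop :=
  symmetric e /\ irreflexive e.

Definition connected_graph (V : finType) (e : rel V) : Prop :=
  forall x y : V, connect e x y.

Definition nonmonitors (V : finType) (M : {set V}) : {set V} := ~: M.

Definition is_graph_path (V : finType) (e : rel V) (p : seq V) : Prop :=
  match p with
  | [::] => False
  | x :: q => path e x q && uniq p
  end.

Definition traverses (V : finType) (p : seq V) (v : V) : bool := v \in p.

Definition failed_paths (V : finType) (P : seq (seq V)) (F : {set V}) :
  seq (seq V) := [seq p <- P | has (fun v => v \in F) p].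

Definition distinguishable (V : finType) (P : seq (seq V)) (F1 F2 : {set V}) :
  Prop := failed_paths P F1 <> failed_paths P F2.

Definition k_identifiable (V : finType) (M : {set V}) (P : seq (seq V))
  (k : nat) (S : {set V}) : Prop :=
  forall F1 F2 : {set V},
    F1 \subset nonmonitors M -> F2 \subset nonmonitors M ->
    #|F1| <= k -> #|F2| <= k ->
    F1 :&: S != F2 :&: S ->
    distinguishable P F1 F2.

Definition separating_condition (V : finType) (M : {set V}) (P : seq (seq V))
  (m : nat) (S : {set V}) : Prop :=
  forall F : {set V}, F \subset nonmonitors M -> #|F| <= m ->
    forall v : V, v \in S :\: F ->
      exists2 p, p \in P & traverses p v && ~~ has (fun u => u \in F) p.

From mathcomp Require Import all_boot.

(* (a) If F1 and F2 differ on some v in S, say v in F1 \ F2, a path through v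
   avoiding F2 fails under F1 but not under F2.
   (b) If every path through v already meets F, then adding v to F changes no
   failed path, while F and v |: F (of size at most k) differ on S.
   Neither direction uses the graph: P may be any family of node sequences. *)

Lemma setI_neq_witness (T : finType) (A B S : {set T}) :
  A :&: S != B :&: S -> exists2 v, v \in S & (v \in A) != (v \in B).
Proof.
move=> neqAB; have /existsP[v] : [exists v, (v \in A :&: S) != (v \in B :&: S)].
  apply: contraR neqAB => /existsPn eqAB; apply/eqP/setP => x.
  exact/eqP/negPn/eqAB.
rewrite !inE; case vS: (v \in S); rewrite ?andbT ?andbF // => ?.
by exists v.
Qed.

Section FailedPaths.

Variables (V : finType) (P : seq (seq V)).

Lemma distinguishable_witness (F1 F2 : {set V}) (p : seq V) :
  p \in P -> has (fun u => u \in F1) p -> ~~ has (fun u => u \in F2) p ->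
  distinguishable P F1 F2.
Proof.
move=> pP pF1 pF2 eqP12.
have : p \in failed_paths P F1 by rewrite mem_filter pF1.
by rewrite eqP12 mem_filter (negbTE pF2).
Qed.

Lemma failed_paths_setU1 (F : {set V}) (v : V) :
  (forall p, p \in P -> v \in p -> has (fun u => u \in F) p) ->
  failed_paths P (v |: F) = failed_paths P F.
Proof.
move=> vF; apply: eq_in_filter => p pP.
have -> : has (fun u => u \in v |: F) p = has (pred1 v) p || has (mem F) p.
  by rewrite -has_predU; apply: eq_has => u; rewrite !inE.
by rewrite has_pred1; case vp: (v \in p) => //=; rewrite vF.
Qed.

Variables (M : {set V}) (S : {set V}).

Lemma separating_identifiable (k : nat) :
  separating_condition M P k S -> k_identifiable M P k S.
Proof.
move=> sep F1 F2 F1N F2N F1k F2k /setI_neq_witness[v vS vF12].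
wlog /andP[vF1 vF2] : F1 F2 F1N F2N F1k F2k {vF12} / (v \in F1) && (v \notin F2).
  move=> IH; case: (boolP (v \in F1)) vF12 => vF1; case: (boolP (v \in F2)) => //= vF2 _.
    by apply: IH; rewrite ?vF1.
  by move=> eqF12; apply: (IH F2 F1) => //; rewrite ?vF2 // eqF12.
have [|p pP /andP[vp pF2]] := sep F2 F2N F2k v; first by rewrite !inE vF2.
by apply: distinguishable_witness pP _ pF2; apply/hasP; exists v.
Qed.

Lemma identifiable_separating (m : nat) :
  S \subset nonmonitors M ->
  k_identifiable M P m.+1 S -> separating_condition M P m S.
Proof.
move=> SN kid F FN Fm v; rewrite !inE => /andP[vF vS].
apply/hasP; apply: contraT => /hasPn noPath; exfalso.
have vFN : v |: F \subset nonmonitors M.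
  by rewrite subUset sub1set (subsetP SN).
have vFm : #|v |: F| <= m.+1 by rewrite cardsU1 vF.
have FvF_S : F :&: S != (v |: F) :&: S.
  apply: contraNneq vF => /setP/(_ v); by rewrite !inE eqxx vS !andbT => ->.
apply: (kid F (v |: F) FN vFN (leqW Fm) vFm FvF_S).
apply/esym/failed_paths_setU1 => p pP vp.
by have := noPath p pP; rewrite /traverses vp negbK.
Qed.

End FailedPaths.

Theorem lemma1 (V : finType) (e : rel V) (M : {set V}) (P : seq (seq V))
  (S : {set V}) (k : nat) :
  simple_graph e -> connected_graph e ->
  (forall p, p \in P -> is_graph_path e p) ->
  S \subset nonmonitors M -> 1 <= k ->
  (separating_condition M P k S -> k_identifiable M P k S) /\
  (k_identifiable M P k S -> separating_condition M P k.-1 S).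
Proof.
move=> _ _ _ SN k_gt0; split; first exact: separating_identifiable.
by rewrite -{1}(prednK k_gt0); exact: identifiable_separating.
Qed.
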